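(* Let $\mathcal N$ be a one-layer ReLU CNN with input dimension $n_0^{(1)}\times n_0^{(2)}\times d_0$, $d_1$ filters of dimension $f_1^{(1)}\times f_1^{(2)}\times d_0$ and stride $s_1$, where $n_0^{(1)},n_0^{(2)},d_0,f_1^{(1)},f_1^{(2)},s_1$ are fixed. Then as $d_1\to\infty$, the maximal number of linear regions satisfies $R_{\mathcal N}=\Theta\big(d_1^{\#\bigcup_{(i,j)\in I_{\mathcal N}}S_{i,j}}\big)$. In particular, if $\bigcup_{(i,j)\in I_{\mathcal N}}S_{i,j}=\{(a,b,c):1\le a\le n_0^{(1)},1\le b\le n_0^{(2)},1\le c\le d_0\}$, then $R_{\mathcal N}=\Theta\big(d_1^{\,n_0^{(1)}n_0^{(2)}d_0}\big)$.
   Context: One-layer ReLU CNN: input $X^0\in\mathbb R^{n_0^{(1)}\times n_0^{(2)}\times d_0}$; filters $W^{1,k}\in\mathbb R^{f_1^{(1)}\times f_1^{(2)}\times d_0}$, biases $B^{1,k}$, $1\le k\le d_1$, stride $s_1$; $n_1^{(r)}=\lfloor (n_0^{(r)}-f_1^{(r)})/s_1\rfloor+1$; pre-activations $Z^1_{i,j,k}=\sum_{a,b,c}W^{1,k}_{a,b,c}X^0_{a+(i-1)s_1,b+(j-1)s_1,c}+B^{1,k}$. An activation pattern assigns $\pm1$ to each neuron $(i,j,k)$; its region is the set of inputs where each pre-activation times its sign is positive. $R_{\mathcal N}$ is the maximum over all parameter values of the number of activation patterns with nonempty region. $I_{\mathcal N}=\{(i,j):1\le i\le n_1^{(1)},1\le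 j\le n_1^{(2)}\}$ and $S_{i,j}=\{(a+(i-1)s_1,b+(j-1)s_1,c):1\le a\le f_1^{(1)},1\le b\le f_1^{(2)},1\le c\le d_0\}$. $f=\Theta(g)$ means $c_1g\le f\le c_2 g$ for some constants $c_1,c_2>0$ and all sufficiently large arguments. *)

From HB Require Import structures.
From mathcomp Require Import all_boot all_order all_algebra.
From mathcomp Require Import boolp reals.
Set Implicit Arguments. Unset Strict Implicit. Unset Printing Implicit Defensive.
Import Order.TTheory GRing.Theory Num.Theory.
Local Open Scope ring_scope.

Definition out_dim (n f s : nat) : nat := ((n - f) %/ s).+1.

Section CNN.
Variable R : realType.
Variables (n01 n02 d0 f1 f2 s d1 : nat).

Notation n11 := (out_dim n01 f1 s).
Notation n12 := (out_dim n02 f2 s).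

(* Input tensor X^0 in R^{n01 x n02 x d0} (0-based indices). *)
Definition input := 'I_n01 -> 'I_n02 -> 'I_d0 -> R.

(* Entry of X at natural-number position (p,q,c); 0 outside the range
   (never used when f1 <= n01, f2 <= n02). *)
Definition xat (X : input) (p q : nat) (c : 'I_d0) : R :=
  match (insub p : option 'I_n01), (insub q : option 'I_n02) with
  | Some p', Some q' => X p' q' c
  | _, _ => 0
  end.

Definition filters := 'I_d1 -> 'I_f1 -> 'I_f2 -> 'I_d0 -> R.
Definition biases := 'I_d1 -> R.

(* Pre-activation Z^1_{i,j,k} (0-based: position a + i*s). *)
Definition preact (W : filters) (B : biases) (X : input)
    (i : 'I_n11) (j : 'I_n12) (k : 'I_d1) : R :=
  (\sum_(a < f1) \sum_(b < f2) \sum_(c < d0)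
      W k a b c * xat X (a + i * s)%N (b + j * s)%N c) + B k.

(* Activation patterns: true = +1, false = -1. *)
Definition pattern := {ffun 'I_n11 * 'I_n12 * 'I_d1 -> bool}.

Definition region_nonempty (W : filters) (B : biases) (sg : pattern) : Prop :=
  exists X : input, forall i j k,
    if sg (i, j, k) then 0 < preact W B X i j k else preact W B X i j k < 0.

Definition num_regions (W : filters) (B : biases) : nat :=
  #|[set sg : pattern | `[< region_nonempty W B sg >]]|.

(* R_N: maximum over all parameter values (the count is at most #|pattern|). *)
Definition max_regions : nat :=
  \max_(r < #|{: pattern}|.+1 | `[< exists W B, num_regions W B = r >]) r.
End CNN.

(* # of the union over (i,j) in I_N of S_{i,j}, a subset of the input index set. *)
Definition covered_count (n01 n02 d0 f1 f2 s : nat) : nat :=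
  #|[set x : 'I_n01 * 'I_n02 * 'I_d0 |
      [exists i : 'I_(out_dim n01 f1 s), exists j : 'I_(out_dim n02 f2 s),
       exists a : 'I_f1, exists b : 'I_f2,
         (x.1.1 == a + i * s :> nat)%N && (x.1.2 == b + j * s :> nat)%N]]|.

Definition BigTheta (R : realType) (f g : nat -> nat) : Prop :=
  exists (c1 c2 : R), 0 < c1 /\ 0 < c2 /\
    exists N : nat, forall d, (N <= d)%N ->
      c1 * (g d)%:R <= (f d)%:R /\ (f d)%:R <= c2 * (g d)%:R.

From HB Require Import structures.
From mathcomp Require Import all_boot all_order all_algebra.
From mathcomp Require Import boolp reals.
From mathcomp Require Import ring lra zify.
Set Implicit Arguments. Unset Strict Implicit. Unset Printing Implicit Defensive.
Import Order.TTheory GRing.Theory Num.Theory.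
Local Open Scope ring_scope.

(* Both bounds are polynomial in d1 with exponent c, the number of input
   coordinates covered by some filter window.
   - Upper bound.  Every pre-activation is an affine function of the input
     that only depends on the c covered coordinates.  A Zaslavsky-type
     deletion–restriction induction shows that k affine functions of m
     variables realize at most (k+1)^m strict sign patterns: deleting one
     function h, the patterns that split into two are realized on the
     hyperplane h = 0 (by convexity), where one variable can be eliminated.
     With k = n11 n12 d1 this gives R_N <= (n11 n12 d1 + 1)^c.
   - Lower bound.  Group the d1 filters by k mod #|O| (O = window offsets):
     filter k reads one input coordinate through its offset and compares it
     with the threshold k div #|O|.  Inputs placing each covered coordinate at
     one of d1 div #|O| + 1 levels yield pairwise distinct patterns, so
     R_N >= (d1 div #|O| + 1)^c. *)

Section SignPatterns.
Variable R : realFieldType.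
Variables (T N : finType).

Local Notation signs := {ffun N -> bool}.

Definition sgn_ok (b : bool) (v : R) : Prop := if b then 0 < v else v < 0.

Definition affine_on (S : {set T}) (g : (T -> R) -> R) : Prop :=
  exists (c : T -> R) (c0 : R),
    (forall i, i \notin S -> c i = 0) /\ forall x, g x = \sum_i c i * x i + c0.

Definition realizes (A : {set N}) (g : N -> (T -> R) -> R) (σ : signs)
    (x : T -> R) : Prop :=
  forall n, n \in A -> sgn_ok (σ n) (g n x).

(* Sign patterns of the family (g n)_(n ∈ A) with a nonempty cell; the signs
   outside A are normalised to false so that patterns are counted once. *)
Definition sign_patterns (A : {set N}) (g : N -> (T -> R) -> R) : {set signs} :=
  [set σ : signs | [forall n in ~: A, ~~ σ n] &&
     `[< exists x, realizes A g σ x >]].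

Lemma affine_on_comb (S : {set T}) g (a b : R) x1 x2 : affine_on S g -> a + b = 1 ->
  g (fun i => a * x1 i + b * x2 i) = a * g x1 + b * g x2.
Proof.
move=> [c [c0 [_ Hg]]] Hab; rewrite !Hg.
under eq_bigr => i _ do rewrite mulrDr mulrCA [c i * (b * _)]mulrCA.
rewrite big_split /= -!mulr_sumr.
have -> : b = 1 - a by rewrite -Hab; ring.
ring.
Qed.

Lemma sgn_ok_comb b u v (p q : R) : sgn_ok b u -> sgn_ok b v -> 0 < p -> 0 < q ->
  sgn_ok b (p * u + q * v).
Proof.
case: b => /= Hu Hv Hp Hq; first by apply: addr_gt0; apply: mulr_gt0.
have : 0 < p * (- u) + q * (- v).
  by apply: addr_gt0; apply: mulr_gt0 => //; rewrite oppr_gt0.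
by rewrite !mulrN -opprD oppr_gt0.
Qed.

(* If a cell meets both open sides of the hyperplane h = 0, it meets the
   hyperplane itself: take the convex combination of the two witnesses. *)
Lemma realizes_on_zero (S : {set T}) (A : {set N}) g h σ x1 x2 :
    (forall n, n \in A -> affine_on S (g n)) -> affine_on S h ->
    realizes A g σ x1 -> realizes A g σ x2 -> 0 < h x1 -> h x2 < 0 ->
  exists x, h x = 0 /\ realizes A g σ x.
Proof.
move=> Haff Hh Hx1 Hx2 h1 h2.
have Hd : h x1 - h x2 != 0 by rewrite gt_eqF // subr_gt0 (lt_trans h2).
pose a := - h x2 / (h x1 - h x2); pose b := h x1 / (h x1 - h x2).
have Ha : 0 < a by apply: divr_gt0; rewrite ?oppr_gt0 // subr_gt0 (lt_trans h2).
have Hb : 0 < b by apply: divr_gt0; rewrite // subr_gt0 (lt_trans h2).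
have Hab : a + b = 1 by rewrite /a /b; field.
exists (fun i => a * x1 i + b * x2 i); split.
  by rewrite (affine_on_comb _ _ Hh Hab) /a /b; field.
move=> n Hn; rewrite (affine_on_comb _ _ (Haff n Hn) Hab).
by apply: sgn_ok_comb => //; [exact: Hx1 | exact: Hx2].
Qed.

Definition coef (g : (T -> R) -> R) (j : T) : R :=
  g (fun i => (i == j)%:R) - g (fun _ => 0).

Lemma coefE g c c0 j : (forall x, g x = \sum_i c i * x i + c0) -> coef g j = c j.
Proof.
move=> Hg; rewrite /coef !Hg (bigD1 j) //= eqxx mulr1.
rewrite big1 => [|i /negbTE ->]; last by rewrite mulr0.
rewrite big1 => [|i _]; last by rewrite mulr0.
by rewrite addr0 add0r addrK.
Qed.

Lemma coef_support (S : {set T}) h j : affine_on S h -> coef h j != 0 -> j \in S.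
Proof.
by move=> [c [c0 [Hc Hh]]]; rewrite (coefE j Hh); apply: contraNT => /Hc ->.
Qed.

Lemma coef0_const (S : {set T}) h : affine_on S h -> (forall j, coef h j = 0) ->
  forall x y, h x = h y.
Proof.
move=> [c [c0 [_ Hh]]] H0 x y; rewrite !Hh.
have Hc j : c j = 0 by rewrite -(coefE j Hh) H0.
by rewrite !big1 // => i _; rewrite Hc mul0r.
Qed.

(* Gaussian elimination of the variable x j using h, whose coefficient at j is
   nonzero: the result no longer depends on x j, and agrees with g on h = 0. *)
Lemma affine_on_elim (S : {set T}) g h j : affine_on S h -> coef h j != 0 ->
  affine_on S g -> affine_on (S :\ j) (fun x => g x - coef g j / coef h j * h x).
Proof.
move=> [c [c0 [Hc Hh]]] Hj [d [d0 [Hd Hg]]].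
rewrite (coefE j Hh) in Hj *; rewrite (coefE j Hg).
exists (fun i => d i - d j / c j * c i), (d0 - d j / c j * c0); split.
  move=> i; rewrite in_setD1 negb_and negbK => /orP[/eqP ->| Hi].
    by rewrite divfK ?subrr.
  by rewrite (Hd i Hi) (Hc i Hi) mulr0 subr0.
move=> x; rewrite Hh Hg.
rewrite [in RHS](eq_bigr (fun i => d i * x i - d j / c j * (c i * x i)));
  last by move=> i _; rewrite mulrBl mulrA.
rewrite sumrB -mulr_sumr; ring.
Qed.

Section Deletion.
Variables (A : {set N}) (g : N -> (T -> R) -> R) (n0 : N).
Hypothesis n0A : n0 \in A.

Definition forget (σ : signs) : signs :=
  [ffun n => if n == n0 then false else σ n].

Definition side (b : bool) : {set signs} :=
  forget @: (sign_patterns A g :&: [set σ : signs | σ n0 == b]).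

Lemma card_side b : #|side b| = #|sign_patterns A g :&: [set σ : signs | σ n0 == b]|.
Proof.
apply: card_in_imset => σ1 σ2; rewrite !inE => /andP[_ /eqP H1] /andP[_ /eqP H2] E.
apply/ffunP => n; have [->|Hn] := eqVneq n n0; first by rewrite H1 H2.
by move/ffunP: E => /(_ n); rewrite !ffunE (negbTE Hn).
Qed.

(* Deletion–restriction count: every pattern of A projects to a pattern of
   A \ n0, and a pattern of A \ n0 has two preimages exactly when it lies in
   both sides. *)
Lemma card_sides :
  #|sign_patterns A g| = (#|side true :|: side false| + #|side true :&: side false|)%N.
Proof.
rewrite cardsUI !card_side -(cardsID [set σ : signs | σ n0 == true] (sign_patterns A g)).
congr (_ + _)%N; apply: eq_card => σ; rewrite !inE.
by case: (σ n0); rewrite /= ?andbT ?andbF.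
Qed.

Lemma side_sub b : side b \subset sign_patterns (A :\ n0) g.
Proof.
apply/subsetP => _ /imsetP[σ Hσ ->]; move: Hσ.
rewrite !inE => /andP[/andP[Hout /asboolP[x Hx]] _].
apply/andP; split.
  apply/forall_inP => n; rewrite !inE ffunE negb_and negbK.
  by case: eqP => //= _ Hn; apply: (forall_inP Hout); rewrite inE.
apply/asboolP; exists x => n; rewrite in_setD1 => /andP[Hn HnA].
by rewrite ffunE (negbTE Hn); exact: Hx.
Qed.

Lemma side_meet σ : σ \in side true :&: side false ->
  exists x1 x2, [/\ 0 < g n0 x1, g n0 x2 < 0,
                    realizes (A :\ n0) g σ x1 & realizes (A :\ n0) g σ x2].
Proof.
have realizes_forget (τ : signs) x :
    realizes A g τ x -> realizes (A :\ n0) g (forget τ) x.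
  move=> Hx n; rewrite in_setD1 => /andP[Hn HnA].
  by rewrite ffunE (negbTE Hn); exact: Hx.
rewrite inE => /andP[/imsetP[σ1 H1 ->] /imsetP[σ2 H2 E]].
move: H1 H2; rewrite !inE => /andP[/andP[_ /asboolP[x1 Hx1]] /eqP b1].
move=> /andP[/andP[_ /asboolP[x2 Hx2]] /eqP b2].
exists x1, x2; split.
- by have := Hx1 n0 n0A; rewrite /sgn_ok b1.
- by have := Hx2 n0 n0A; rewrite /sgn_ok b2.
- exact: realizes_forget.
- by rewrite E; exact: realizes_forget.
Qed.
End Deletion.

Lemma card_sign_patterns0 g : (#|sign_patterns set0 g| <= 1)%N.
Proof.
rewrite -(cards1 [ffun _ : N => false]); apply: subset_leq_card; apply/subsetP => σ.
rewrite !inE => /andP[/forall_inP H _]; apply/eqP/ffunP => n.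
by rewrite ffunE; apply/negbTE; apply: H; rewrite !inE.
Qed.

(* Monotonicity of m ^ e in the base, including the exponent 0. *)
Lemma leq_expn2r m n e : (m <= n)%N -> (m ^ e <= n ^ e)%N.
Proof. by case: e => [//|e] Hmn; rewrite leq_exp2r. Qed.

Lemma exp_step k m : (k.+1 ^ m.+1 + k.+1 ^ m <= k.+2 ^ m.+1)%N.
Proof.
have H : (k.+1 ^ m <= k.+2 ^ m)%N by rewrite leq_expn2r.
rewrite !expnS; nia.
Qed.

Lemma card_sign_patterns k (A : {set N}) (S : {set T}) g : #|A| = k ->
  (forall n, n \in A -> affine_on S (g n)) -> (#|sign_patterns A g| <= k.+1 ^ #|S|)%N.
Proof.
elim: k A S g => [|k IH] A S g HA Haff.
  by move/eqP: HA; rewrite cards_eq0 => /eqP ->; rewrite exp1n card_sign_patterns0.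
have [n0 Hn0] : exists n0, n0 \in A by apply/set0Pn; rewrite -card_gt0 HA.
have HA' : #|A :\ n0| = k by move: HA; rewrite (cardsD1 n0) Hn0 add1n => -[].
have Haff' n : n \in A :\ n0 -> affine_on S (g n).
  by rewrite in_setD1 => /andP[_]; exact: Haff.
rewrite (card_sides A g n0).
have HU : (#|side A g n0 true :|: side A g n0 false| <= k.+1 ^ #|S|)%N.
  apply: leq_trans (IH _ S g HA' Haff'); apply: subset_leq_card.
  by rewrite subUset !side_sub.
have [[j Hj] | Hconst] := pselect (exists j, coef (g n0) j != 0).
  have HjS := coef_support (Haff n0 Hn0) Hj.
  pose g' n x := g n x - coef (g n) j / coef (g n0) j * g n0 x.
  have Haff'' n : n \in A :\ n0 -> affine_on (S :\ j) (g' n).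
    by move=> Hn; apply: affine_on_elim => //; [exact: Haff | exact: Haff'].
  have HM : (#|side A g n0 true :&: side A g n0 false| <= k.+1 ^ #|S :\ j|)%N.
    apply: leq_trans (IH _ _ g' HA' Haff''); apply: subset_leq_card.
    apply/subsetP => σ Hσ; have [x1 [x2 [h1 h2 Hx1 Hx2]]] := side_meet Hn0 Hσ.
    have [x [Hx0 Hx]] := realizes_on_zero Haff' (Haff n0 Hn0) Hx1 Hx2 h1 h2.
    move: Hσ; rewrite inE => /andP[/(subsetP (side_sub A g n0 true))].
    rewrite !inE => /andP[Hout _] _; apply/andP; split => //.
    by apply/asboolP; exists x => n Hn; rewrite /g' Hx0 mulr0 subr0; exact: Hx.
  rewrite (cardsD1 j S) HjS add1n in HU *.
  by apply: leq_trans (exp_step k _); exact: leq_add.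
have Hcoef0 j : coef (g n0) j = 0.
  by apply/eqP; apply: contra_notT Hconst => Hj; exists j.
have Hc := coef0_const (Haff n0 Hn0) Hcoef0.
suff -> : side A g n0 true :&: side A g n0 false = set0.
  by rewrite cards0 addn0 (leq_trans HU) // leq_expn2r.
apply/setP => σ; rewrite [RHS]inE; apply/negP => /(side_meet Hn0) [x1 [x2 [h1 h2 _ _]]].
by move: h1; rewrite (Hc x1 x2) ltNge (ltW h2).
Qed.
End SignPatterns.

Section AffineClosure.
Variable R : realFieldType.
Variable T : finType.
Implicit Type S : {set T}.

Lemma affine_on_ext S (g1 g2 : (T -> R) -> R) :
  affine_on S g1 -> (forall x, g1 x = g2 x) -> affine_on S g2.
Proof. by move=> [c [c0 [H1 H2]]] E; exists c, c0; split => // x; rewrite -E. Qed.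

Lemma affine_on_const S (v : R) : affine_on S (fun _ => v).
Proof.
by exists (fun _ => 0), v; split => // x; rewrite big1 ?add0r // => i _; rewrite mul0r.
Qed.

Lemma affine_on_coord S p : p \in S -> affine_on S (fun x : T -> R => x p).
Proof.
move=> Hp; exists (fun i => (i == p)%:R), 0; split.
  by move=> i; case: eqP => // ->; rewrite Hp.
move=> x; rewrite addr0 (bigD1 p) //= eqxx mul1r big1 ?addr0 // => i /negbTE ->.
by rewrite mul0r.
Qed.

Lemma affine_on_add S (g1 g2 : (T -> R) -> R) : affine_on S g1 -> affine_on S g2 ->
  affine_on S (fun x => g1 x + g2 x).
Proof.
move=> [c [c0 [H1 H2]]] [d [d0 [K1 K2]]].
exists (fun i => c i + d i), (c0 + d0); split.
  by move=> i Hi; rewrite H1 // K1 // addr0.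
move=> x; rewrite H2 K2.
under [in RHS]eq_bigr => i _ do rewrite mulrDl.
rewrite big_split /=; ring.
Qed.

Lemma affine_on_scale S (a : R) (g : (T -> R) -> R) : affine_on S g ->
  affine_on S (fun x => a * g x).
Proof.
move=> [c [c0 [H1 H2]]]; exists (fun i => a * c i), (a * c0); split.
  by move=> i Hi; rewrite H1 // mulr0.
move=> x; rewrite H2 mulrDr mulr_sumr.
by congr (_ + _); apply: eq_bigr => i _; rewrite mulrA.
Qed.

Lemma affine_on_sum S (I : finType) (F : I -> (T -> R) -> R) :
  (forall a, affine_on S (F a)) -> affine_on S (fun x => \sum_a F a x).
Proof.
move=> H; elim: (index_enum I) => [|a r IH].
  by apply: affine_on_ext (affine_on_const S 0) _ => x; rewrite big_nil.
by apply: affine_on_ext (affine_on_add (H a) IH) _ => x; rewrite big_cons.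
Qed.
End AffineClosure.

Section CNNRegions.
Variable R : realType.
Variables (n01 n02 d0 f1 f2 s : nat).
Hypotheses (hf1 : (0 < f1 <= n01)%N) (hf2 : (0 < f2 <= n02)%N) (hd0 : (0 < d0)%N).

Local Notation n11 := (out_dim n01 f1 s).
Local Notation n12 := (out_dim n02 f2 s).
Local Notation T := ('I_n01 * 'I_n02 * 'I_d0)%type.
Local Notation O := ('I_f1 * 'I_f2 * 'I_d0)%type.

Definition covered : {set T} :=
  [set x : T | [exists i : 'I_n11, exists j : 'I_n12, exists a : 'I_f1, exists b : 'I_f2,
       (x.1.1 == a + i * s :> nat)%N && (x.1.2 == b + j * s :> nat)%N]].

Lemma covered_countE : covered_count n01 n02 d0 f1 f2 s = #|covered|.
Proof. by []. Qed.

Lemma window_pos_lt n f (hf : (0 < f <= n)%N) (i : 'I_(out_dim n f s)) (a : 'I_f) :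
  (a + i * s < n)%N.
Proof.
have Hi : (i <= (n - f) %/ s)%N by rewrite -ltnS; exact: ltn_ord.
have H1 : (i * s <= n - f)%N.
  by apply: leq_trans (leq_divM (n - f) s); rewrite leq_mul2r Hi orbT.
have Ha := ltn_ord a; move: hf => /andP[_ hf]; lia.
Qed.

Definition row_pos (i : 'I_n11) (a : 'I_f1) : 'I_n01 := Ordinal (window_pos_lt hf1 i a).
Definition col_pos (j : 'I_n12) (b : 'I_f2) : 'I_n02 := Ordinal (window_pos_lt hf2 j b).

Lemma xat_window (X : input R n01 n02 d0) (i : 'I_n11) (j : 'I_n12) (a : 'I_f1) (b : 'I_f2) c :
  xat X (a + i * s) (b + j * s) c = X (row_pos i a) (col_pos j b) c.
Proof.
rewrite /xat (insubT (fun p => p < n01)%N (window_pos_lt hf1 i a)).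
by rewrite (insubT (fun p => p < n02)%N (window_pos_lt hf2 j b)).
Qed.

Lemma window_covered (i : 'I_n11) (j : 'I_n12) (a : 'I_f1) (b : 'I_f2) c :
  (row_pos i a, col_pos j b, c) \in covered.
Proof.
rewrite inE; apply/existsP; exists i; apply/existsP; exists j.
by apply/existsP; exists a; apply/existsP; exists b; rewrite /= !eqxx.
Qed.

(* Upper bound: the n11 n12 d1 pre-activations are affine in the covered
   coordinates, so the arrangement bound applies. *)
Lemma num_regions_upper d1 (W : filters R d0 f1 f2 d1) (B : biases R d1) :
  (num_regions n01 n02 s W B <= (n11 * n12 * d1).+1 ^ #|covered|)%N.
Proof.
pose g (n : 'I_n11 * 'I_n12 * 'I_d1) (x : T -> R) :=
  preact W B (fun a b c => x (a, b, c)) n.1.1 n.1.2 n.2.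
have Hcard : #|[set: 'I_n11 * 'I_n12 * 'I_d1]| = (n11 * n12 * d1)%N.
  by rewrite cardsT !card_prod !card_ord.
have Haff n : n \in [set: 'I_n11 * 'I_n12 * 'I_d1] -> affine_on covered (g n).
  move: n => [[i j] k] _; rewrite /g /preact /=.
  apply: affine_on_add; last exact: affine_on_const.
  apply: affine_on_sum => a; apply: affine_on_sum => b; apply: affine_on_sum => c.
  apply: affine_on_scale.
  apply: affine_on_ext (affine_on_coord R (window_covered i j a b c)) _ => x.
  by rewrite xat_window.
apply: leq_trans (card_sign_patterns Hcard Haff); apply: subset_leq_card.
apply/subsetP => σ; rewrite !inE => /asboolP [X HX].
apply/andP; split; first by apply/forall_inP => n; rewrite !inE.
by apply/asboolP; exists (fun p => X p.1.1 p.1.2 p.2) => -[[i j] k] _; exact: HX.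
Qed.

Lemma card_offsets_gt0 : (0 < #|{: O}|)%N.
Proof.
rewrite !card_prod !card_ord !muln_gt0 hd0.
by move: hf1 hf2 => /andP[-> _] /andP[-> _].
Qed.

(* Lower-bound network: filter k reads the single window offset number
   k mod #|O| and has bias -(k div #|O|), so each covered input coordinate is
   compared with about d1/#|O| integer thresholds. *)
Definition filter_offset d1 (k : 'I_d1) : O :=
  enum_val (Ordinal (ltn_pmod k card_offsets_gt0)).

Definition probe_filters d1 : filters R d0 f1 f2 d1 :=
  fun k a b c => ((a, b, c) == filter_offset k)%:R.
Definition threshold_biases d1 : biases R d1 := fun k => - (k %/ #|{: O}|)%:R.
Arguments probe_filters : clear implicits.
Arguments threshold_biases : clear implicits.

Definition level_input r (g : {ffun T -> 'I_r.+1}) : input R n01 n02 d0 :=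
  fun a b c => (g (a, b, c) : nat)%:R - 2^-1.

Lemma sum_delta (G : 'I_f1 -> 'I_f2 -> 'I_d0 -> R) (o : O) :
  \sum_a \sum_b \sum_c ((a, b, c) == o)%:R * G a b c = G o.1.1 o.1.2 o.2.
Proof.
case: o => [[a0 b0] c0] /=.
rewrite (bigD1 a0) //= [X in _ + X]big1 => [|a Ha]; last first.
  rewrite big1 // => b _; rewrite big1 // => c _.
  by rewrite !xpair_eqE (negbTE Ha) mul0r.
rewrite addr0 (bigD1 b0) //= [X in _ + X]big1 => [|b Hb]; last first.
  by rewrite big1 // => c _; rewrite !xpair_eqE eqxx (negbTE Hb) mul0r.
rewrite addr0 (bigD1 c0) //= [X in _ + X]big1 => [|c Hc]; last first.
  by rewrite !xpair_eqE !eqxx (negbTE Hc) mul0r.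
by rewrite addr0 !eqxx mul1r.
Qed.

Definition window_coord (i : 'I_n11) (j : 'I_n12) (o : O) : T :=
  (row_pos i o.1.1, col_pos j o.1.2, o.2).

Lemma preact_probe d1 r (g : {ffun T -> 'I_r.+1}) i j (k : 'I_d1) :
  preact (probe_filters d1) (threshold_biases d1) (level_input g) i j k =
  (g (window_coord i j (filter_offset k)) : nat)%:R - 2^-1 - (k %/ #|{: O}|)%:R.
Proof.
rewrite /preact /probe_filters.
rewrite (sum_delta (fun a b c => xat (level_input g) (a + i * s) (b + j * s) c)).
by rewrite xat_window.
Qed.

Lemma sgn_ok_level (u t : nat) : sgn_ok (t < u)%N (u%:R - 2^-1 - t%:R : R).
Proof.
have h0 : 0 < 2^-1 :> R by rewrite invr_gt0.
have h1 : 2^-1 < 1 :> R by rewrite invf_lt1 // ltr1n.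
rewrite /sgn_ok; case: ltnP => H.
  have : (t.+1%:R <= u%:R :> R) by rewrite ler_nat.
  by rewrite -addn1 natrD => ?; lra.
have : (u%:R <= t%:R :> R) by rewrite ler_nat.
by move=> ?; lra.
Qed.

Definition level_pattern d1 r (g : {ffun T -> 'I_r.+1}) : pattern n01 n02 f1 f2 s d1 :=
  [ffun n : 'I_n11 * 'I_n12 * 'I_d1 =>
     (n.2 %/ #|{: O}| < g (window_coord n.1.1 n.1.2 (filter_offset n.2)))%N].
Arguments level_pattern : clear implicits.

Lemma level_pattern_region d1 r (g : {ffun T -> 'I_r.+1}) :
  region_nonempty (probe_filters d1) (threshold_biases d1) (level_pattern d1 r g).
Proof.
by exists (level_input g) => i j k; rewrite ffunE preact_probe; exact: sgn_ok_level.
Qed.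

(* With r = d1 div #|O| levels, two level assignments differing at a covered
   coordinate p are separated by the filter with offset p and threshold
   min (g1 p, g2 p). *)
Lemma level_pattern_sep d1 (g1 g2 : {ffun T -> 'I_(d1 %/ #|{: O}|).+1}) p :
  p \in covered -> (g1 p < g2 p)%N -> level_pattern d1 _ g1 != level_pattern d1 _ g2.
Proof.
set F := #|{: O}|; set r := (d1 %/ F)%N.
case: p => [[p1 p2] p3] + Hlt; rewrite inE.
move=> /existsP [i /existsP [j /existsP [a /existsP [b /andP [/eqP E1 /eqP E2]]]]].
set t := (g1 (p1, p2, p3) : nat).
have Ht : (t < r)%N by apply: leq_trans Hlt _; rewrite -ltnS; exact: ltn_ord.
pose o : O := (a, b, p3).
have Hk : (t * F + enum_rank o < d1)%N.
  apply: (@leq_trans (t.+1 * F)); first by rewrite mulSnr ltn_add2l ltn_ord.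
  by apply: leq_trans (leq_divM d1 F); rewrite leq_mul2r Ht orbT.
pose k : 'I_d1 := Ordinal Hk.
have Hoff : filter_offset k = o.
  rewrite /filter_offset -[RHS]enum_rankK; congr enum_val; apply: val_inj => /=.
  by rewrite modnMDl modn_small.
have Hdiv : (k %/ F = t)%N by rewrite /= divnMDl ?card_offsets_gt0 // divn_small ?addn0.
have Hpos : window_coord i j o = (p1, p2, p3).
  by rewrite /window_coord /=; congr (_, _, _); apply: val_inj => /=; rewrite ?E1 ?E2.
apply/negP => /eqP /ffunP /(_ (i, j, k)); rewrite !ffunE /= Hoff Hdiv Hpos.
by rewrite ltnn Hlt.
Qed.

(* Lower bound: the level assignments supported on the covered coordinates
   give pairwise distinct realizable patterns. *)
Lemma num_regions_lower d1 :
  ((d1 %/ #|{: O}|).+1 ^ #|covered| <=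
     num_regions n01 n02 s (probe_filters d1) (threshold_biases d1))%N.
Proof.
set r := (d1 %/ #|{: O}|)%N.
pose PF := pffun_on (ord0 : 'I_r.+1) covered predT.
have -> : (r.+1 ^ #|covered| = #|PF|)%N by rewrite card_pffun_on card_ord.
rewrite /num_regions -(card_in_imset (f := level_pattern d1 r)).
  apply: subset_leq_card; apply/subsetP => σ /imsetP [g _ ->].
  by rewrite inE; apply/asboolP; exact: level_pattern_region.
have Hsupp g : g \in PF -> forall p, p \notin covered -> g p = ord0.
  move=> /pffun_onP [Hs _] p Hp; apply/eqP; apply: contraNT Hp => Hg.
  by apply: (subsetP Hs); rewrite inE.
move=> g1 g2 H1 H2 Heq; apply/ffunP => p.
have [Hp|Hp] := boolP (p \in covered); last by rewrite !Hsupp.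
case: (ltngtP (g1 p) (g2 p)) => H; last exact: val_inj.
- by have := level_pattern_sep Hp H; rewrite Heq eqxx.
- by have := level_pattern_sep Hp H; rewrite Heq eqxx.
Qed.

Lemma num_regions_le_max d1 (W : filters R d0 f1 f2 d1) (B : biases R d1) :
  (num_regions n01 n02 s W B <= max_regions R n01 n02 d0 f1 f2 s d1)%N.
Proof.
have H : (num_regions n01 n02 s W B < #|{: pattern n01 n02 f1 f2 s d1}|.+1)%N.
  by rewrite ltnS max_card.
apply: (@leq_bigmax_cond _ _ (fun i : 'I__ => (i : nat)) (Ordinal H)) => /=.
by apply/asboolP; exists W, B.
Qed.

Lemma max_regions_le d1 M :
  (forall (W : filters R d0 f1 f2 d1) (B : biases R d1), num_regions n01 n02 s W B <= M)%N ->
  (max_regions R n01 n02 d0 f1 f2 s d1 <= M)%N.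
Proof. by move=> HM; apply/bigmax_leqP => i /asboolP [W [B <-]]; exact: HM. Qed.

Lemma max_regions_bounds d1 :
  ((d1 %/ #|{: O}|).+1 ^ #|covered| <= max_regions R n01 n02 d0 f1 f2 s d1)%N /\
  (max_regions R n01 n02 d0 f1 f2 s d1 <= (n11 * n12 * d1).+1 ^ #|covered|)%N.
Proof.
split; first exact: leq_trans (num_regions_lower d1) (num_regions_le_max _ _).
by apply: max_regions_le => W B; apply: num_regions_upper.
Qed.

Lemma max_regions_theta :
  BigTheta R (fun d1 => max_regions R n01 n02 d0 f1 f2 s d1) (fun d1 => d1 ^ #|covered|)%N.
Proof.
set F := #|{: O}|; set m := #|covered|.
have HF : 0 < (F%:R : R) ^+ m by rewrite exprn_gt0 // ltr0n card_offsets_gt0.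
exists ((F%:R : R) ^+ m)^-1, ((n11 * n12).+1%:R ^+ m); split; first by rewrite invr_gt0.
split; first by rewrite exprn_gt0 // ltr0n.
exists 1%N => d Hd; have [Hlo Hup] := max_regions_bounds d.
split.
  rewrite ler_pdivrMl // -natrX -natrM ler_nat.
  apply: (@leq_trans (((d %/ F).+1 * F) ^ m)).
    by apply: leq_expn2r; apply: ltnW; apply: ltn_ceil; exact: card_offsets_gt0.
  by rewrite expnMn mulnC leq_mul2l Hlo orbT.
rewrite -natrX -natrM ler_nat; apply: (leq_trans Hup).
rewrite -expnMn; apply: leq_expn2r.
move: Hd; set q := (n11 * n12)%N; nia.
Qed.
End CNNRegions.

Theorem theorem3 (R : realType) (n01 n02 d0 f1 f2 s : nat)
    (hf1 : (0 < f1 <= n01)%N) (hf2 : (0 < f2 <= n02)%N)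
    (hd0 : (0 < d0)%N) (hs : (0 < s)%N) :
  BigTheta R (fun d1 => max_regions R n01 n02 d0 f1 f2 s d1)
             (fun d1 => d1 ^ covered_count n01 n02 d0 f1 f2 s)%N
  /\ ((covered_count n01 n02 d0 f1 f2 s = n01 * n02 * d0)%N ->
     BigTheta R (fun d1 => max_regions R n01 n02 d0 f1 f2 s d1)
                (fun d1 => d1 ^ (n01 * n02 * d0))%N).
Proof.
have Htheta := max_regions_theta R s hf1 hf2 hd0.
rewrite covered_countE; split=> [|Hfull]; first exact: Htheta.
by rewrite -Hfull.
Qed.
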